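(* Let $t,k,n$ be positive integers with $t\le k\le n$ and $n\ge (t+1)(k-t+1)$. Let $\mathcal F=\{F\in\binom{[n]}{k}:[t]\subseteq F\}$ and $\mathcal G=\mathcal A(n,k,t)=\{G\in\binom{[n]}{k}: |G\cap[t+2]|\ge t+1\}$. Then ${\rm co}_2(\mathcal G)\le{\rm co}_2(\mathcal F)$, and equality holds only if $k=t+1$ and $n=2t+2$; in this case $\mathcal F\cong\mathcal G^c=\{[n]\setminus G: G\in\mathcal G\}$.
   Context: For $\mathcal H\subseteq\binom{[n]}{k}$ and $E\subseteq[n]$, $d(E)=|\{H\in\mathcal H:E\subseteq H\}|$, and ${\rm co}_2(\mathcal H)=\sum_{E\in\binom{[n]}{k-1}}d(E)^2$. $\cong$ means equality up to a permutation of $[n]$. *)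

(* Ground set [n] = {1..n} is modelled as 'I_n = {0..n-1};
   [m] (m <= n) corresponds to {i : 'I_n | val i < m}. *)
From mathcomp Require Import all_boot.
From mathcomp Require Import fingroup perm.
Set Implicit Arguments. Unset Strict Implicit. Unset Printing Implicit Defensive.

Definition initseg (n m : nat) : {set 'I_n} := [set i : 'I_n | val i < m].

Definition deg (n : nat) (H : {set {set 'I_n}}) (E : {set 'I_n}) : nat :=
  #|[set A in H | E \subset A]|.

Definition co2 (n k : nat) (H : {set {set 'I_n}}) : nat :=
  \sum_(E : {set 'I_n} | #|E| == k.-1) (deg H E) ^ 2.

Definition starFam (n k t : nat) : {set {set 'I_n}} :=
  [set F : {set 'I_n} | (#|F| == k) && (initseg n t \subset F)].

Definition AFam (n k t : nat) : {set {set 'I_n}} :=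
  [set G : {set 'I_n} | (#|G| == k) && (t.+1 <= #|G :&: initseg n t.+2|)].

Definition complFam (n : nat) (H : {set {set 'I_n}}) : {set {set 'I_n}} :=
  [set ~: A | A in H].

Definition famIso (n : nat) (H1 H2 : {set {set 'I_n}}) : Prop :=
  exists s : {perm 'I_n}, [set (s : {perm 'I_n}) @: (A : {set 'I_n}) | A in H1] = H2.

(* Both families are threshold families {A : |A| = k, |A :&: S| >= r}: F with
   S = [t], r = t, and G with S = [t+2], r = t+1.  In such a family the degree
   of a (k-1)-set E depends only on a = |E :&: S|: it is n-k+1 if a >= r,
   |S| - a if a = r-1, and 0 otherwise.  So co2 is a sum of at most three
   products of binomial coefficients and the comparison becomes a polynomial
   inequality.  For k = t the family G is empty; for k = t+1,
   co2(F) = n(n-t) >= 2(t+1)(t+2) = co2(G), with equality iff n = 2t+2; for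
   k >= t+2 the inequality is strict.  In the equality case G^c is the star of
   the t-set [n] \ [t+2], which the permutation swapping [t] with [n] \ [t+2]
   maps onto F. *)

From mathcomp Require Import all_boot fingroup perm zify.
Set Implicit Arguments. Unset Strict Implicit. Unset Printing Implicit Defensive.

Section FinsetCounting.

Variable T : finType.
Implicit Types (A E S U : {set T}) (P : pred {set T}).

Lemma subset_card_setI A S : (#|A| <= #|A :&: S|) = (A \subset S).
Proof.
apply/idP/idP => [le_A_AS | /setIidPl -> //].
by apply/setIidPl/eqP; rewrite eqEcard subsetIl.
Qed.

Lemma card_setU1I E S x : x \notin E ->
  #|(x |: E) :&: S| = (x \in S) + #|E :&: S|.
Proof.
move=> xE; rewrite setIUl; case: (boolP (x \in S)) => xS.
  by rewrite (setIidPl _) ?sub1set // cardsU1 inE (negbTE xE).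
by rewrite disjoint_setI0 ?set0U // disjoints1.
Qed.

Lemma card_supersets1 E P :
  #|[set A : {set T} | [&& #|A| == #|E|.+1, E \subset A & P A]]| =
  #|[set x | (x \notin E) && P (x |: E)]|.
Proof.
rewrite -(card_in_imset (f := fun x => x |: E)
                        (D := [set x | (x \notin E) && P (x |: E)])); last first.
  move=> x y; rewrite !inE => /andP[xE _] /andP[yE _] exy.
  have : x \in y |: E by rewrite -exy setU11.
  by rewrite !inE (negbTE xE) orbF => /eqP.
congr #|pred_of_set _|; apply/setP=> A; rewrite inE; apply/idP/imsetP => [|[x]].
  case/and3P=> /eqP cA EA PA.
  have /cards1P[x Ax] : #|A :\: E| == 1 by rewrite cardsD (setIidPr EA) cA subSnn.
  have xAE : x \in A :\: E by rewrite Ax set11.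
  have defA : A = x |: E by rewrite -{1}(setID A E) (setIidPr EA) Ax setUC.
  by exists x => //; rewrite inE -defA PA andbT; case/setDP: xAE.
rewrite inE => /andP[xE Px] ->.
by rewrite cardsU1 xE add1n eqxx subsetUr Px.
Qed.

Definition trace_count m S a :=
  #|[set E : {set T} | (#|E| == m) && (#|E :&: S| == a)]|.

Lemma trace_count_gt m a S : m < a -> trace_count m S a = 0.
Proof.
move=> lt_m_a; apply/eqP; rewrite cards_eq0; apply/eqP/setP=> E; rewrite !inE.
apply/negbTE; apply/negP=> /andP[/eqP cE /eqP cES].
by move: (subset_leq_card (subsetIl E S)); rewrite cES cE leqNgt lt_m_a.
Qed.

Lemma trace_countE a b S :
  trace_count (a + b) S a = 'C(#|S|, a) * 'C(#|~: S|, b).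
Proof.
pose f E := (E :&: S, E :&: ~: S).
have f_inj : injective f.
  by move=> E F [ES EC]; rewrite -(setID E S) -(setID F S) !setDE ES EC.
rewrite /trace_count -(card_imset _ f_inj) -!cards_draws -cardsX.
congr #|pred_of_set _|; apply/setP=> -[P Q]; rewrite !inE /=.
apply/imsetP/andP => [[E] | [/andP[PS /eqP cP] /andP[QS /eqP cQ]]].
  rewrite inE => /andP[/eqP cE /eqP cES] [-> ->].
  rewrite !subsetIr cES eqxx -setDE; split=> //=.
  by move: (cardsID S E); rewrite cES cE => /addnI ->.
have SC : [disjoint S & ~: S] by rewrite disjoints_subset setCK.
have PQ : P :&: Q = set0.
  exact: disjoint_setI0 (disjointWl PS (disjointWr QS SC)).
have QS0 : Q :&: S = set0 by apply/disjoint_setI0; rewrite disjoints_subset.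
have PC0 : P :&: ~: S = set0 by apply/disjoint_setI0; rewrite disjoints_subset setCK.
exists (P :|: Q).
  by rewrite inE cardsU PQ cards0 subn0 cP cQ eqxx !setIUl (setIidPl PS) QS0 setU0 cP /=.
by rewrite /f !setIUl (setIidPl PS) (setIidPl QS) QS0 PC0 setU0 set0U.
Qed.

Definition star k U : {set {set T}} := [set A : {set T} | (#|A| == k) && (U \subset A)].

Definition threshold k S r : {set {set T}} :=
  [set A : {set T} | (#|A| == k) && (r <= #|A :&: S|)].

Lemma star_threshold k U : star k U = threshold k U #|U|.
Proof. by apply/setP=> A; rewrite !inE setIC subset_card_setI. Qed.

Lemma imset_star_perm (s : {perm T}) k U :
  [set s @: (A : {set T}) | A in star k U] = star k (s @: U).
Proof.
have sK : cancel (fun A : {set T} => s @: A) (fun B => (s^-1)%g @: B).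
  by move=> A; rewrite -imset_comp (eq_imset _ (permK s)) imset_id.
have sKV : cancel (fun B : {set T} => (s^-1)%g @: B) (fun A => s @: A).
  by move=> B; rewrite -imset_comp (eq_imset _ (permKV s)) imset_id.
rewrite (can2_imset_pre _ sK sKV); apply/setP=> B.
by rewrite !inE card_imset ?sub_imset_pre ?(can2_imset_pre _ (permKV s) (permK s)) //; apply: perm_inj.
Qed.

End FinsetCounting.

Lemma card_initseg n m : m <= n -> #|initseg n m| = m.
Proof.
move=> le_m_n; have widen_inj : injective (widen_ord le_m_n).
  by move=> i j /(congr1 val) ij; apply: val_inj.
rewrite -[m in RHS]card_ord -(card_imset _ widen_inj).
apply: eq_card => i; rewrite inE; apply/idP/imsetP => [lt_i_m | [j _ ->]].
  by exists (Ordinal lt_i_m); last exact: val_inj.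
exact: ltn_ord j.
Qed.

Lemma card_initsegC n m : m <= n -> #|~: initseg n m| = n - m.
Proof. by move=> le_m_n; rewrite cardsCs setCK card_ord card_initseg. Qed.

Lemma trace_count_initseg n s m a b : s <= n -> a + b = m ->
  trace_count m (initseg n s) a = 'C(s, a) * 'C(n - s, b).
Proof. by move=> le_s_n <-; rewrite trace_countE card_initseg // card_initsegC. Qed.

(* The (t+i+1)-sets containing [t] split according to their trace on [t+2] :\: [t]. *)
Lemma trace_count_top n t i : t.+2 <= n ->
  trace_count (t + i.+1) (initseg n t.+2) t.+2 + 'C(n - t.+2, i.+1) +
    2 * 'C(n - t.+2, i) = 'C(n - t, i.+1).
Proof.
move=> le_tSS_n; have -> : n - t = (n - t.+2).+2 by lia.
case: i => [|i]; first by rewrite trace_count_gt ?addn1 // !bin1 bin0; lia.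
rewrite (trace_count_initseg (b := i)) ?addSnnS // binn mul1n !binS; lia.
Qed.

Definition threshold_deg d s r a :=
  if r <= a then d else if r == a.+1 then s - a else 0.

Lemma threshold_deg_ge d s r a : r <= a -> threshold_deg d s r a = d.
Proof. by rewrite /threshold_deg => ->. Qed.

Lemma threshold_deg_edge d s a : threshold_deg d s a.+1 a = s - a.
Proof. by rewrite /threshold_deg ltnn eqxx. Qed.

Lemma threshold_deg_lt d s r a : a.+1 < r -> threshold_deg d s r a = 0.
Proof. by rewrite /threshold_deg => lt_aS_r; rewrite leqNgt ltnW // gtn_eqF. Qed.

Lemma deg_threshold n k (S E : {set 'I_n}) r : 0 < k -> #|E| = k.-1 ->
  deg (threshold k S r) E = threshold_deg (n - k.-1) #|S| r #|E :&: S|.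
Proof.
move=> k_gt0 cE; set a := #|E :&: S|.
have -> : deg (threshold k S r) E =
          #|[set x | (x \notin E) && (r <= (x \in S) + a)]|.
  rewrite /deg (_ : [set A in _ | _] =
    [set A : {set 'I_n} | [&& #|A| == #|E|.+1, E \subset A & r <= #|A :&: S|]]).
    rewrite card_supersets1; apply: eq_card => x; rewrite !inE.
    by case: (boolP (x \in E)) => //= xE; rewrite card_setU1I.
  by apply/setP=> A; rewrite !inE cE prednK // andbAC -andbA.
set X := [set x | _ && _]; rewrite /threshold_deg; case: leqP => [le_r_a | lt_a_r].
  have -> : X = ~: E.
    by apply/setP=> x; rewrite !inE (leq_trans le_r_a (leq_addl _ _)) andbT.
  by rewrite cardsCs setCK card_ord cE.
case: eqP => [r_aS | /eqP ne_r_aS].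
  have -> : X = S :\: E.
    by apply/setP=> x; rewrite !inE r_aS andbC; case: (x \in S) => /=; lia.
  by rewrite cardsD setIC.
apply/eqP; rewrite cards_eq0; apply/eqP/setP=> x; rewrite !inE.
by apply/negbTE; rewrite negb_and -ltnNge orbC; case: (x \in S) => /=; lia.
Qed.

Lemma co2_threshold n k (S : {set 'I_n}) r : 0 < k ->
  co2 k (threshold k S r) =
  \sum_(a < #|S|.+1) threshold_deg (n - k.-1) #|S| r a ^ 2 * trace_count k.-1 S a.
Proof.
move=> k_gt0; rewrite /co2.
under eq_bigr => E /eqP cE do rewrite deg_threshold //.
have trace_lt E : #|E :&: S| < #|S|.+1 by rewrite ltnS subset_leq_card ?subsetIr.
rewrite (partition_big (fun E => inord #|E :&: S| : 'I_#|S|.+1) predT) //=.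
apply: eq_bigr => a _.
rewrite (eq_bigl (fun E => E \in [set E : {set 'I_n} | (#|E| == k.-1) && (#|E :&: S| == a)])).
  rewrite (eq_bigr (fun=> threshold_deg (n - k.-1) #|S| r a ^ 2)).
    by rewrite sum_nat_const mulnC.
  by move=> E; rewrite inE => /andP[_ /eqP ->].
by move=> E; rewrite inE -(inj_eq val_inj) /= (inordK (trace_lt E)).
Qed.

Lemma co2_starFam n k t : 0 < t -> 0 < k -> t <= n ->
  co2 k (starFam n k t) =
  trace_count k.-1 (initseg n t) t.-1 + (n - k.-1) ^ 2 * trace_count k.-1 (initseg n t) t.
Proof.
move=> t_gt0 k_gt0 le_t_n.
have -> : starFam n k t = threshold k (initseg n t) t.
  by rewrite -[t in threshold _ _ t](card_initseg le_t_n) -star_threshold.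
rewrite co2_threshold // card_initseg //; case: t t_gt0 {le_t_n} => // t _.
rewrite !big_ord_recr big1 => [|a _] /=; last by rewrite threshold_deg_lt ?ltnS.
by rewrite threshold_deg_edge threshold_deg_ge // subSnn mul1n.
Qed.

Lemma co2_AFam n k t : 0 < k -> t.+2 <= n ->
  co2 k (AFam n k t) =
  4 * trace_count k.-1 (initseg n t.+2) t +
  (n - k.-1) ^ 2 * (trace_count k.-1 (initseg n t.+2) t.+1 +
                    trace_count k.-1 (initseg n t.+2) t.+2).
Proof.
move=> k_gt0 le_tSS_n.
rewrite [AFam n k t]/(threshold k (initseg n t.+2) t.+1) co2_threshold //.
rewrite card_initseg // !big_ord_recr big1 => [|a _] /=; last by rewrite threshold_deg_lt ?ltnS.
rewrite threshold_deg_edge !threshold_deg_ge // (_ : t.+2 - t = 2); last by lia.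
by rewrite mulnDr addnA.
Qed.

Lemma mul4_binSSn m : 4 * 'C(m.+2, m) = 2 * m.+1 * m.+2.
Proof.
have {2}-> : m = m.+2 - 2 by rewrite !subSS subn0.
by rewrite bin_sub // (_ : 4 = 2 * 2`!) // -mulnA [2`! * _]mulnC bin_ffact ffactnS ffactn1; lia.
Qed.

(* With L = n - k, x = 'C(n-t-2, k-t-1), c = 'C(n-t-2, k-t-2), A = 'C(n-t, k-t)
   and Q the number of (k-1)-sets containing [t+2], the two sides are co2 of
   AFam and of starFam when k = t + i + 2. *)
Lemma co2_gap_arith t i L x c A Q :
  0 < t -> t * i.+2 < L -> i.+1 * x = L * c -> 0 < c -> 2 * x <= A ->
  2 * t.+1 * t.+2 * x + L.+1 ^ 2 * (t.+2 * c + Q) < t * A + L.+1 ^ 2 * (x + 2 * c + Q).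
Proof.
move=> t_gt0 lt_L x_c c_gt0 le_2x_A.
have : 2 * t.+1 * t.+2 * L + L.+1 ^ 2 * (t * i.+1) < 2 * t * L + L.+1 ^ 2 * L.
  have [e ->] : exists e, L = (t * i.+2).+1 + e by exists (L - (t * i.+2).+1); lia.
  nia.
rewrite -(ltn_pmul2l c_gt0).
move: (2 * t.+1 * t.+2) (L.+1 ^ 2) => K D gap.
suff : i.+1 * (K * x + D * (t * c)) < i.+1 * (2 * t * x + D * x).
  by rewrite ltn_pmul2l //; move: (leq_mul2l t (2 * x) A); rewrite le_2x_A orbT; nia.
have scale M : i.+1 * (M * x) = c * (M * L) by rewrite mulnCA x_c mulnA mulnC.
by rewrite !mulnDr !scale; nia.
Qed.

Lemma co2_AFam_diag n t : co2 t (AFam n t t) = 0.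
Proof.
have -> : AFam n t t = set0.
  apply/setP=> G; rewrite !inE; apply/negbTE; apply/negP=> /andP[/eqP cG].
  by rewrite ltnNge -cG subset_leq_card ?subsetIl.
rewrite /co2 big1 // => E _; rewrite /deg (_ : [set A in set0 | _] = set0) ?cards0 //.
by apply/setP=> A; rewrite !inE.
Qed.

Lemma co2_starFam_diag_gt0 n t : 0 < t -> t <= n -> 0 < co2 t (starFam n t t).
Proof.
move=> t_gt0 le_t_n; rewrite co2_starFam // (trace_count_initseg (b := 0)) ?addn0 //.
by rewrite bin0 muln1 ltn_addr // bin_gt0 leq_pred.
Qed.

Lemma co2_starFam_succ n t : 0 < t -> t <= n ->
  co2 t.+1 (starFam n t.+1 t) = n * (n - t).
Proof.
move=> t_gt0 le_t_n; rewrite co2_starFam //.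
rewrite (trace_count_initseg (b := 1)) ?addn1 ?prednK //.
rewrite (trace_count_initseg (b := 0)) ?addn0 // bin1 bin0 binn muln1.
rewrite -[in 'C(t, _)](prednK t_gt0) binSn prednK //; nia.
Qed.

Lemma co2_AFam_succ n t : t.+2 <= n -> co2 t.+1 (AFam n t.+1 t) = 2 * t.+1 * t.+2.
Proof.
move=> le_tSS_n; rewrite co2_AFam // (trace_count_gt (a := t.+1)) //.
rewrite (trace_count_gt (a := t.+2)) //.
by rewrite (trace_count_initseg (b := 0)) ?addn0 // bin0 !muln1 muln0 addn0 mul4_binSSn.
Qed.

Lemma co2_AFam_lt_starFam n k t : 0 < t -> t.+2 <= k -> t.+1 * (k - t).+1 <= n ->
  co2 k (AFam n k t) < co2 k (starFam n k t).
Proof.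
move=> t_gt0 le_tSS_k le_n.
have [i def_k] : exists i, k = t + i.+2 by exists (k - t.+2); lia.
rewrite def_k (_ : t + i.+2 - t = i.+2) in le_n; last by lia.
have le_tSS_n : t.+2 <= n by apply: leq_trans le_n; rewrite mulSn; lia.
have lt_L : t * i.+2 < n - k by rewrite def_k; move: le_n; rewrite mulSn mulnS; lia.
clear le_n le_tSS_k.
rewrite co2_AFam ?co2_starFam ?def_k //; [|lia..].
have -> : (t + i.+2).-1 = t + i.+1 by rewrite addnS.
have -> : n - (t + i.+1) = (n - (t + i.+2)).+1 by lia.
have le_t_n : t <= n by lia.
rewrite (trace_count_initseg (s := t) (a := t) (b := i.+1)) // binn mul1n -trace_count_top //.
rewrite (trace_count_initseg (s := t) (a := t.-1) (b := i.+2)) //; last by lia.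
rewrite (trace_count_initseg (s := t.+2) (a := t) (b := i.+1)) //.
rewrite (trace_count_initseg (s := t.+2) (a := t.+1) (b := i)) ?addSnnS // binSn.
rewrite -[in 'C(t, _)](prednK t_gt0) binSn prednK // -def_k.
have -> : n - t = (n - t.+2).+2 by lia.
set L := n - k; set m := n - t.+2; set Q := trace_count _ _ _.
have x_c : i.+1 * 'C(m, i.+1) = L * 'C(m, i).
  by rewrite mul_bin_left /L /m def_k; congr (_ * _); lia.
have c_gt0 : 0 < 'C(m, i) by rewrite bin_gt0 /m; lia.
have le_2x_A : 2 * 'C(m, i.+1) <= 'C(m.+2, i.+2) by rewrite !binS; lia.
have := co2_gap_arith Q t_gt0 lt_L x_c c_gt0 le_2x_A.
by rewrite mulnA mul4_binSSn; lia.
Qed.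

Definition swap_blocks t i := if i < t then i + t.+2 else if t.+2 <= i then i - t.+2 else i.

Lemma swap_blocks_lt t i : i < t.+2 + t -> swap_blocks t i < t.+2 + t.
Proof. by move=> lt_i; rewrite /swap_blocks; repeat case: ifP => ?; lia. Qed.

Lemma swap_blocksK t i : i < t.+2 + t -> swap_blocks t (swap_blocks t i) = i.
Proof.
rewrite /swap_blocks => lt_i.
by case: (ltnP i t) => ? /=; [|case: (ltnP t.+1 i) => ? /=]; repeat case: ifP => ?; lia.
Qed.

Lemma exists_perm_initseg n t : n = t.+2 + t ->
  exists s : {perm 'I_n}, s @: initseg n t = ~: initseg n t.+2.
Proof.
move=> ->; pose f (i : 'I_(t.+2 + t)) := insubd i (swap_blocks t i).
have fE i : val (f i) = swap_blocks t i by rewrite val_insubd swap_blocks_lt.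
have fK : involutive f by move=> i; apply: val_inj; rewrite !fE swap_blocksK.
have sK : cancel (perm (can_inj fK)) (perm (can_inj fK)) by move=> i; rewrite !permE.
exists (perm (can_inj fK)); rewrite (can2_imset_pre _ sK sK).
apply/setP=> i; have := ltn_ord i; rewrite !inE permE fE /swap_blocks.
by case: (ltnP i t) => ? /=; [|case: (ltnP t.+1 i) => ? /=]; lia.
Qed.

Lemma complFam_AFam_succ n t : n = t.+2 + t ->
  complFam (AFam n t.+1 t) = star t.+1 (~: initseg n t.+2).
Proof.
move=> def_n; rewrite /complFam (can2_imset_pre _ setCK setCK); apply/setP=> B.
rewrite !inE subCset.
have -> : (#|B| == t.+1) = (#|~: B| == t.+1).
  by have := max_card B; rewrite (cardsCs (~: B)) setCK !card_ord; lia.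
by apply: andb_id2l => /eqP <-; apply: subset_card_setI.
Qed.

Lemma famIso_starFam_complFam n t : n = t.+2 + t ->
  famIso (starFam n t.+1 t) (complFam (AFam n t.+1 t)).
Proof.
move=> def_n; have [s s_initseg] := exists_perm_initseg def_n.
by exists s; rewrite complFam_AFam_succ // -s_initseg imset_star_perm.
Qed.

Unset Implicit Arguments.

Theorem lemma4p4 (t k n : nat) :
  0 < t -> t <= k -> k <= n -> t.+1 * (k - t).+1 <= n ->
  co2 k (AFam n k t) <= co2 k (starFam n k t) /\
  (co2 k (AFam n k t) = co2 k (starFam n k t) ->
     [/\ k = t.+1, n = (2 * t + 2)%N &
         famIso (starFam n k t) (complFam (AFam n k t))]).
Proof.
move=> t_gt0 le_t_k le_k_n le_n.
have [def_k | ne_k_tS] := eqVneq k t.+1.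
  subst k; rewrite subSnn in le_n.
  rewrite co2_AFam_succ ?co2_starFam_succ //; [|lia..]; split; first nia.
  move=> eq_co2; have def_n : n = t.+2 + t by nia.
  by split; [|lia|exact: famIso_starFam_complFam].
have lt_co2 : co2 k (AFam n k t) < co2 k (starFam n k t).
  case: (ltngtP k t.+1) => [lt_k_tS | lt_tS_k | eq_k_tS]; last by rewrite eq_k_tS eqxx in ne_k_tS.
    have eq_k_t : k = t by lia.
    by rewrite eq_k_t co2_AFam_diag co2_starFam_diag_gt0 // -eq_k_t.
  exact: co2_AFam_lt_starFam.
by split=> [|eq_co2]; [exact: ltnW | rewrite eq_co2 ltnn in lt_co2].
Qed.
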